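(* Let $\varphi=\frac{1+\sqrt5}{2}$ and $\bar\varphi=\frac{1-\sqrt5}{2}$. Consider the two systems of functional equations for a map $f:\mathsf P^1(\mathbb Z)\to\mathsf P^1(\mathbb C)$: (A) $f(1-1/x)=1-1/f(x)$ and $f(-1/x)=-f(x)$ for all $x\in\mathsf P^1(\mathbb Z)$; (B) $f(1-1/x)=1-1/f(x)$ and $f(-1/(1+x))=-1-1/f(x)$ for all $x\in\mathsf P^1(\mathbb Z)$. Each of (A) and (B) has exactly two solutions, namely one with $f(1)=\varphi^2=\frac{3+\sqrt5}{2}$ and one with $f(1)=\bar\varphi^2=\frac{3-\sqrt5}{2}$.
   Context: $\mathsf P^1(\mathbb Z)=\mathbb Q\cup\{\infty\}$, $\mathsf P^1(\mathbb C)=\mathbb C\cup\{\infty\}$, with Möbius transformations extended to $\infty$ in the usual way. Interpretation: with Dyer's outer automorphism $\alpha$ of $\mathsf{PGL}_2(\mathbb Z)$ (defined by $\alpha(U)=U$, $\alpha(K)=K$, $\alpha(V)=UV$ where $U(x)=1/x$, $K(x)=1-x$, $V(x)=-x$), system (A) says $f(gx)=\alpha(g)f(x)$ for all $g\in\mathsf{PSL}_2(\mathbb Z)$, and system (B) says the same for all $g$ in $\Gamma=\langle L,SLS\rangle$, where $L(x)=1-1/x$, $S(x)=-1/x$. *)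

(* P^1(Z) = option rat (None = oo), P^1(C) = option R[i]
   with R the Stdlib reals viewed as a realType (hence rcfType). *)
From HB Require Import structures.
From mathcomp Require Import all_boot all_order all_algebra.
From mathcomp Require Import complex.
From mathcomp Require Import Rstruct.
Set Implicit Arguments. Unset Strict Implicit. Unset Printing Implicit Defensive.
Import Order.TTheory GRing.Theory Num.Theory.
Local Open Scope ring_scope.

Definition P1 (F : Type) := option F.

Section P1ops.
Variable F : fieldType.
Definition p1inv (x : P1 F) : P1 F :=
  match x with
  | None => Some 0
  | Some a => if a == 0 then None else Some a^-1
  end.
Definition p1add (c : F) (x : P1 F) : P1 F := omap (fun a => c + a) x.
Definition p1opp (x : P1 F) : P1 F := omap (fun a => - a) x.
End P1ops.

Definition mobL (F : fieldType) (x : P1 F) : P1 F := p1add 1 (p1opp (p1inv x)).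
Definition mobS (F : fieldType) (x : P1 F) : P1 F := p1opp (p1inv x).
Definition mobT (F : fieldType) (x : P1 F) : P1 F := p1opp (p1inv (p1add 1 x)).
Definition mobV (F : fieldType) (x : P1 F) : P1 F := p1opp x.
Definition mobW (F : fieldType) (x : P1 F) : P1 F := p1add (-1) (p1opp (p1inv x)).

Definition Cx := (Rdefinitions.R)[i].

Definition systemA (f : P1 rat -> P1 Cx) : Prop :=
  (forall x, f (mobL x) = mobL (f x)) /\ (forall x, f (mobS x) = mobV (f x)).
Definition systemB (f : P1 rat -> P1 Cx) : Prop :=
  (forall x, f (mobL x) = mobL (f x)) /\ (forall x, f (mobT x) = mobW (f x)).

Definition phi2 : Cx := ((3 + Num.sqrt 5) / 2 : Rdefinitions.R)%:C%C.
Definition phibar2 : Cx := ((3 - Num.sqrt 5) / 2 : Rdefinitions.R)%:C%C.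

(* Dyer's automorphism sends the translation x |-> x + 1 = L(S x) to
   tau(x) = 1 + 1/x = L(-x), whose fixed points are the roots phi, phibar of
   a^2 = a + 1.  Existence: for a fixed point c, expanding x in a continued
   fraction, f(x + 1) = tau f(x), f(-1/x) = -f(x), f(oo) = c defines f; the
   relation (S T)^3 = 1 makes these two rules compatible, so f solves (A),
   hence (B).  Uniqueness: a solution of (B) satisfies f(x + 2) = tau^2 f(x),
   so f(oo) is a fixed point of tau^2, i.e. phi or phibar, and
   f(1) = L f(oo) = 2 - f(oo); moreover f(oo) determines f by induction on
   denominators, since shifts by 2 bring x into [-1, 1), where x = L z or
   x = T z with a smaller denominator. *)

From Stdlib Require Import FunctionalExtensionality.
From HB Require Import structures.
From mathcomp Require Import all_boot all_order all_algebra.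
From mathcomp Require Import complex Rstruct.
From mathcomp Require Import ring lra zify.
Set Implicit Arguments. Unset Strict Implicit. Unset Printing Implicit Defensive.
Import Order.TTheory GRing.Theory Num.Theory.
Local Open Scope ring_scope.

Section ProjectiveLine.
Variable F : fieldType.
Implicit Types (a : F) (x y : P1 F).

Lemma p1oppK : involutive (@p1opp F).
Proof. by case=> //= a; rewrite opprK. Qed.

Lemma p1invK : involutive (@p1inv F).
Proof.
case=> [a|] /=; last by rewrite eqxx.
by have [->|a0] := eqVneq a 0; rewrite /= ?eqxx // invr_eq0 (negPf a0) invrK.
Qed.

Lemma p1invN x : p1inv (p1opp x) = p1opp (p1inv x).
Proof.
case: x => [a|] /=; last by rewrite oppr0.
by rewrite oppr_eq0; case: eqP => //= _; rewrite invrN.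
Qed.

Lemma p1oppD a x : p1opp (p1add a x) = p1add (- a) (p1opp x).
Proof. by case: x => //= b; rewrite opprD. Qed.

Lemma p1addA a b x : p1add a (p1add b x) = p1add (a + b) x.
Proof. by case: x => //= c; rewrite addrA. Qed.

Lemma p1add0 x : p1add 0 x = x.
Proof. by case: x => //= a; rewrite add0r. Qed.

(* x / (x + 1) = 1 - 1 / (x + 1): the one genuinely projective identity,
   from which the relation (S T)^3 = 1 of PSL_2(Z) follows. *)
Lemma p1inv_add1_inv x : p1inv (p1add 1 (p1inv x)) = p1add 1 (p1opp (p1inv (p1add 1 x))).
Proof.
case: x => [a|] /=; last by rewrite addr0 oner_eq0 /= invr1 oppr0 addr0.
have [->|a0] := eqVneq a 0; first by rewrite /= addr0 oner_eq0 /= invr1 subrr.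
have [a1|a1] := eqVneq (1 + a) 0.
  have -> : a = -1 by apply/eqP; rewrite -addr_eq0 addrC a1.
  by rewrite /= invrN1 subrr eqxx.
rewrite /=; have -> : 1 + a^-1 = (1 + a) / a by field.
rewrite mulf_eq0 invr_eq0 (negPf a0) (negPf a1) /=; congr Some; field.
by rewrite a0 a1.
Qed.

(* tau(x) = 1 + 1/x is the image alpha(x + 1) of the translation. *)
Definition tau x : P1 F := p1add 1 (p1inv x).
Definition tau_inv x : P1 F := p1inv (p1add (-1) x).

Lemma tauK : cancel tau tau_inv.
Proof. by move=> x; rewrite /tau /tau_inv p1addA addNr p1add0 p1invK. Qed.

Lemma tau_invK : cancel tau_inv tau.
Proof. by move=> x; rewrite /tau /tau_inv p1invK p1addA subrr p1add0. Qed.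

Lemma mobS_Some a : a != 0 -> mobS (Some a) = Some (- a^-1).
Proof. by move=> a0; rewrite /mobS /= (negPf a0). Qed.

Lemma mobSK : involutive (@mobS F).
Proof. by move=> x; rewrite /mobS p1invN p1oppK p1invK. Qed.

Lemma mobL_opp y : mobL (p1opp y) = tau y.
Proof. by rewrite /mobL p1invN p1oppK. Qed.

Lemma mobW_tau y : mobW y = p1opp (tau y).
Proof. by rewrite /mobW /tau p1oppD. Qed.

Lemma mobL_mobT x : mobL (mobT x) = p1add 1 (p1add 1 x).
Proof. by rewrite /mobL -/(mobS (mobT x)) /mobT -/(mobS (p1add 1 x)) mobSK. Qed.

Lemma mobL_mobW y : mobL (mobW y) = tau (tau y).
Proof. by rewrite mobW_tau mobL_opp. Qed.

Lemma mobS_add1 x : mobS (p1add 1 x) = p1add (-1) (mobS (p1add (-1) (mobS x))).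
Proof.
by rewrite /mobS -!p1oppD p1invN p1inv_add1_inv p1oppD p1oppK p1addA addNr p1add0.
Qed.

Lemma tau_inv_braid y : tau_inv (p1opp (tau_inv (p1opp y))) = p1opp (tau y).
Proof.
by rewrite /tau_inv /tau -!p1oppD !p1invN -p1inv_add1_inv p1invK.
Qed.

Definition tauz (n : int) x : P1 F :=
  match n with Posz m => iter m tau x | Negz m => iter m.+1 tau_inv x end.

Lemma tauzD1 n x : tauz (n + 1) x = tau (tauz n x).
Proof.
case: n => [m|[|m]] /=; first by rewrite addn1.
  by rewrite tau_invK.
by rewrite subn1 tau_invK.
Qed.

Lemma golden_neq0 a : a ^+ 2 = a + 1 -> a != 0.
Proof.
by apply: contra_eq_neq => ->; rewrite expr0n add0r eq_sym oner_eq0.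
Qed.

Lemma tau_golden a : a ^+ 2 = a + 1 -> tau (Some a) = Some a.
Proof.
move=> ha; have a0 := golden_neq0 ha.
rewrite /tau /= (negPf a0) /=; congr Some; apply: (mulIf a0).
by rewrite mulrDl mul1r mulVf // -expr2 ha addrC.
Qed.

Lemma mobL_golden a : a ^+ 2 = a + 1 -> mobL (Some a) = Some (2 - a).
Proof.
move=> ha; have a0 := golden_neq0 ha.
rewrite /mobL /= (negPf a0) /=; congr Some; apply: (mulIf a0).
by rewrite mulrBl mul1r mulVf // mulrBl -expr2 ha; ring.
Qed.

Lemma tau2_fixed y : tau (tau y) = y -> exists2 a, y = Some a & a ^+ 2 = a + 1.
Proof.
case: y => [a|]; last by rewrite /tau /= addr0 oner_eq0.
have [->|a0] := eqVneq a 0.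
  by rewrite /tau /= eqxx /= => -[] /eqP; rewrite addr0 oner_eq0.
rewrite /tau /= (negPf a0) /=; have [//|a1] := eqVneq (1 + a^-1) 0.
move=> [e]; exists a => //; apply/eqP; rewrite -subr_eq0.
have a1' : a + 1 != 0.
  by apply: contraNneq a1 => e1; rewrite -[1 + a^-1](mulfK a0) mulrDl mul1r mulVf // e1 mul0r.
have -> : a ^+ 2 - (a + 1) = (a - (1 + (1 + a^-1)^-1)) * (a + 1).
  by field; rewrite a0 a1'.
by rewrite e subrr mul0r.
Qed.

End ProjectiveLine.

Lemma denqDz (x : rat) (m : int) : denq (x + m%:~R) = denq x.
Proof.
have -> : x + m%:~R = (numq x + m * denq x)%:~R / (denq x)%:~R.
  by rewrite intrD intrM numqE -mulrDl mulfK // intr_eq0 denq_neq0.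
rewrite coprimeq_den ?denq_eq0 ?normr_denq // -coprimezE.
by rewrite coprimez_sym /coprimez addrC gcdzMDl gcdzC; exact: coprime_num_den.
Qed.

Lemma denqV (x : rat) : x != 0 -> denq x^-1 = `|numq x|.
Proof.
move=> x0; rewrite -[x in x^-1]divq_num_den invf_div coprimeq_den ?numq_eq0 ?(negPf x0) //.
by rewrite coprime_sym coprime_num_den.
Qed.

Lemma denqV_lt (x : rat) : 0 < x -> x < 1 -> denq x^-1 < denq x.
Proof.
move=> x0 x1; rewrite denqV ?gt_eqF // gtr0_norm ?numq_gt0 // -(ltr_int rat).
by rewrite numqE gtr_pMl // ltr0z denq_gt0.
Qed.

Definition frac_part (x : rat) : rat := x - (Num.floor x)%:~R.

Lemma frac_part_ge0 x : 0 <= frac_part x.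
Proof. by rewrite subr_ge0 floor_le. Qed.

Lemma frac_part_lt1 x : frac_part x < 1.
Proof. by rewrite ltrBlDl; have := floorD1_gt x; rewrite intrD. Qed.

Lemma denq_frac_part x : denq (frac_part x) = denq x.
Proof. by rewrite /frac_part -intrN denqDz. Qed.

Lemma floorD1 (x : rat) : Num.floor (1 + x) = Num.floor x + 1.
Proof. by rewrite addrC floorDrz ?floor1 // intr_int. Qed.

Lemma frac_partD1 x : frac_part (1 + x) = frac_part x.
Proof. by rewrite /frac_part floorD1 intrD; ring. Qed.

Lemma denq_frac_part_inv x : frac_part x != 0 -> denq (- (frac_part x)^-1) < denq x.
Proof.
move=> r0; rewrite denqN -(denq_frac_part x) denqV_lt ?frac_part_lt1 //.
by rewrite lt_neqAle eq_sym r0 frac_part_ge0.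
Qed.

Section Solution.
Variables (F : fieldType) (c : F).

(* Writing x = n + r with n = floor x: f(x) = tau^n f(r), f(0) = -f(oo) and
   f(r) = -f(-1/r) for 0 < r < 1; the denominator drops at each step, so
   denq x steps of fuel suffice. *)
Fixpoint solution_fuel (k : nat) (x : rat) : P1 F :=
  if k is k.+1 then
    tauz (Num.floor x)
      (if frac_part x == 0 then Some (- c)
       else p1opp (solution_fuel k (- (frac_part x)^-1)))
  else None.

Lemma solution_fuel_eq k k' x : denq x <= k%:Z -> denq x <= k'%:Z ->
  solution_fuel k x = solution_fuel k' x.
Proof.
elim: k k' x => [|k IH] [|k'] x /= hk hk'; try by have := denq_gt0 x; lia.
case: eqP => // /eqP r0; congr (tauz _ (p1opp _)).
have lt_den := denq_frac_part_inv r0; apply: IH; lia.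
Qed.

Definition solution (x : P1 rat) : P1 F :=
  if x is Some q then solution_fuel `|denq q|%N q else Some c.

Lemma solutionE q : solution (Some q) =
  tauz (Num.floor q)
    (if frac_part q == 0 then Some (- c)
     else p1opp (solution (Some (- (frac_part q)^-1)))).
Proof.
have [d dq] := denqP q; rewrite /= dq /=.
case: eqP => // /eqP r0; congr (tauz _ (p1opp _)).
have lt_den := denq_frac_part_inv r0; apply: solution_fuel_eq; rewrite ?absz_denq; lia.
Qed.

Hypothesis c_fixed : tau (Some c) = Some c.

Lemma solution_add1 x : solution (p1add 1 x) = tau (solution x).
Proof.
case: x => [q|]; last exact: esym c_fixed.
change (solution (Some (1 + q)) = tau (solution (Some q))).
by rewrite solutionE floorD1 frac_partD1 tauzD1 -solutionE.
Qed.

Lemma solution_sub1 x : solution (p1add (-1) x) = tau_inv (solution x).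
Proof. by rewrite -[in RHS](p1add0 x) -(subrr 1) -p1addA solution_add1 tauK. Qed.

Let S_equivariant_at x := solution (mobS x) = p1opp (solution x).

Lemma S_equivariant_mobS x : S_equivariant_at (mobS x) -> S_equivariant_at x.
Proof. by rewrite /S_equivariant_at mobSK => ->; rewrite p1oppK. Qed.

Lemma S_equivariant_None : S_equivariant_at None.
Proof. by []. Qed.

Lemma S_equivariant_unit r : 0 < r -> r < 1 -> S_equivariant_at (Some r).
Proof.
move=> r0 r1; apply: S_equivariant_mobS.
have fl : Num.floor r = 0 by apply: floor_def; rewrite ltW.
rewrite /S_equivariant_at mobSK mobS_Some ?gt_eqF // solutionE /frac_part fl subr0.
by rewrite (gt_eqF r0).
Qed.

Lemma S_equivariant_add1 y : S_equivariant_at y ->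
  S_equivariant_at (p1add (-1) (mobS y)) -> S_equivariant_at (p1add 1 y).
Proof.
rewrite /S_equivariant_at => Sy SWy.
by rewrite mobS_add1 solution_sub1 SWy solution_sub1 Sy tau_inv_braid solution_add1.
Qed.

Lemma S_equivariant_nonneg n x : 0 <= x -> x < n%:R -> S_equivariant_at (Some x).
Proof.
elim: n x => [|n IH] x x0 xn; first by move: xn; rewrite ltNge x0.
have [x1|x1] := ltrP x 1.
  have [->|x_neq0] := eqVneq x 0.
    by apply: S_equivariant_mobS; exact: S_equivariant_None.
  by apply: S_equivariant_unit; rewrite // lt_neqAle eq_sym x_neq0.
have y_ge0 : 0 <= x - 1 by rewrite subr_ge0.
have y_lt : x - 1 < n%:R by move: xn; rewrite -natr1; lra.
have -> : Some x = p1add 1 (Some (x - 1)) by rewrite /= addrC subrK.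
move: (x - 1) y_ge0 y_lt => y y_ge0 y_lt.
apply: S_equivariant_add1; first exact: IH.
have [->|y0] := eqVneq y 0; first exact: S_equivariant_None.
have yV_gt0 : 0 < y^-1 by rewrite invr_gt0 lt_neqAle eq_sym y0.
apply: S_equivariant_mobS; rewrite mobS_Some //= mobS_Some; last by apply/eqP; lra.
rewrite -invrN opprB opprK.
by apply: S_equivariant_unit; rewrite ?invr_gt0 ?invf_lt1; lra.
Qed.

Lemma solution_mobS x : solution (mobS x) = p1opp (solution x).
Proof.
case: x => [x|]; last exact: S_equivariant_None.
have [x0|x0] := leP 0 x; first exact: (S_equivariant_nonneg x0 (archi_boundP x0)).
apply: S_equivariant_mobS; rewrite mobS_Some ?lt_eqF //.
have x'_ge0 : 0 <= - x^-1 by rewrite oppr_ge0 invr_le0 ltW.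
exact: (S_equivariant_nonneg x'_ge0 (archi_boundP x'_ge0)).
Qed.

End Solution.

Lemma solution_systemA (c : Cx) : tau (Some c) = Some c -> systemA (solution c).
Proof.
move=> c_fixed; split=> x; last exact: solution_mobS.
rewrite -[mobL x]/(p1add 1 (mobS x)) (solution_add1 c_fixed) (solution_mobS c_fixed).
by rewrite -[in RHS](p1oppK (solution c x)) mobL_opp.
Qed.

Lemma systemA_systemB f : systemA f -> systemB f.
Proof.
move=> [fL fS]; split=> // x.
rewrite /mobT -/(mobS (p1add 1 x)) fS.
have -> : p1add 1 x = mobL (mobS x) by rewrite /mobL -/(mobS (mobS x)) mobSK.
by rewrite fL fS mobL_opp mobW_tau.
Qed.

Lemma systemB_add2 f x : systemB f -> f (p1add 1 (p1add 1 x)) = tau (tau (f x)).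
Proof. by move=> [fL fT]; rewrite -mobL_mobT fL fT mobL_mobW. Qed.

Lemma periodic_mulrz (V : zmodType) (P : V -> Prop) (p : V) :
  (forall x, P (x + p) <-> P x) -> forall x (k : int), P (x + p *~ k) <-> P x.
Proof.
move=> Pp x; elim/int_rec => [|n IH|n IH]; first by rewrite mulr0z addr0.
  by rewrite -pmulrn mulrSr addrA Pp pmulrn.
have -> : x + p *~ - (n.+1)%:Z = x + p *~ - n%:Z - p by rewrite -!nmulrn mulrSr opprD addrA.
by apply: iff_trans (iff_sym (Pp _)) _; rewrite subrK.
Qed.

Section Uniqueness.
Variables f g : P1 rat -> P1 Cx.
Hypotheses (fB : systemB f) (gB : systemB g) (eq_oo : f None = g None).

Lemma systemB_eq_add2 x : f (Some (x + 2)) = g (Some (x + 2)) <-> f (Some x) = g (Some x).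
Proof.
have -> : Some (x + 2) = p1add 1 (p1add 1 (Some x)) by rewrite /=; congr Some; ring.
rewrite !systemB_add2 //.
by split=> [/(can_inj (@tauK _))/(can_inj (@tauK _)) | ->].
Qed.

Lemma systemB_eq_unit x : (forall z, denq z < denq x -> f (Some z) = g (Some z)) ->
  -1 <= x < 1 -> f (Some x) = g (Some x).
Proof.
have [fL fT] := fB; have [gL gT] := gB.
move=> IH /andP[x_ge x_lt].
have [->|x0] := eqVneq x 0.
  by have -> : Some (0 : rat) = mobL (mobL None) by []; rewrite fL fL gL gL eq_oo.
have [->|x1] := eqVneq x (-1).
  by have -> : Some (-1 : rat) = mobT (mobT None) by []; rewrite fT fT gT gT eq_oo.
have [x_gt0|x_lt0] := ltrP 0 x.
  have y_gt0 : 0 < 1 - x by lra.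
  have -> : Some x = mobL (Some (1 - x)^-1).
    by rewrite /mobL /= invr_eq0 gt_eqF //= invrK; congr Some; ring.
  rewrite fL gL IH // -(denqN x) -(denqDz (- x) 1) addrC denqV_lt //; lra.
have x_neg : x < 0 by rewrite lt_neqAle x0.
have -> : Some x = mobT (Some (- x^-1 - 1)).
  by rewrite /mobT /= addrC subrK oppr_eq0 invr_eq0 (negPf x0) /= invrN invrK opprK.
rewrite fT gT IH //.
rewrite (denqDz _ (-1)) -invrN -(denqN x) denqV_lt ?oppr_gt0 //; lra.
Qed.

Lemma systemB_unique : f = g.
Proof.
apply: functional_extensionality => -[x|] //.
have [n] := ubnP `|denq x|%N; elim: n x => // n IH x den_x.
pose k := Num.floor ((x + 1) / 2).
have /andP [k_le k_lt] := floor_itv ((x + 1) / 2); rewrite -/k intrD mulr1z in k_le k_lt.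
have den_y : denq (x - 2 *~ k) = denq x.
  by rewrite (_ : x - 2 *~ k = x + (- (2 * k))%:~R) ?denqDz // intrN intrM mulrzr.
rewrite -(subrK (2 *~ k) x).
apply/(periodic_mulrz (P := fun y => f (Some y) = g (Some y)) systemB_eq_add2).
apply: systemB_eq_unit; last by rewrite -mulrzr; apply/andP; split; lra.
rewrite den_y => z z_lt; apply: IH.
by move: den_x; rewrite -!ltz_nat !absz_denq; lia.
Qed.

End Uniqueness.

Lemma systemB_infinity f : systemB f -> exists2 a, f None = Some a & a ^+ 2 = a + 1.
Proof. by move=> fB; apply: tau2_fixed; rewrite -(systemB_add2 None fB). Qed.

Lemma systemB_one f : systemB f -> f (Some 1) = mobL (f None).
Proof. by move=> [fL _]; rewrite -fL. Qed.

Definition sqrt5 : Cx := (Num.sqrt 5 : Rdefinitions.R)%:C%C.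
Definition phiC : Cx := (1 + sqrt5) / 2.
Definition psiC : Cx := (1 - sqrt5) / 2.

Lemma sqrt5_sq : sqrt5 ^+ 2 = 5.
Proof. by rewrite -rmorphXn sqr_sqrtr ?ler0n // rmorph_nat. Qed.

Lemma golden_roots (a : Cx) : a ^+ 2 = a + 1 <-> a = phiC \/ a = psiC.
Proof.
have factor : (a - phiC) * (a - psiC) = a ^+ 2 - (a + 1).
  rewrite (_ : _ * _ = a ^+ 2 - a + (1 - sqrt5 ^+ 2) / 4); last by rewrite /phiC /psiC; field.
  by rewrite sqrt5_sq; field.
split=> [ha | ha].
  have /eqP := factor; rewrite ha subrr mulf_eq0 !subr_eq0 => /orP[] /eqP; by [left | right].
by apply/eqP; rewrite -subr_eq0 -factor; case: ha => ->; rewrite subrr ?mul0r ?mulr0.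
Qed.

Lemma phi2E : phi2 = 2 - psiC.
Proof. by rewrite /phi2 /psiC /sqrt5 fmorph_div rmorphD !rmorph_nat; field. Qed.

Lemma phibar2E : phibar2 = 2 - phiC.
Proof. by rewrite /phibar2 /phiC /sqrt5 fmorph_div rmorphB !rmorph_nat; field. Qed.

Section IntermediateSystem.
Variable sys : (P1 rat -> P1 Cx) -> Prop.
Hypotheses (sys_B : forall f, sys f -> systemB f) (sys_A : forall f, systemA f -> sys f).

Lemma sys_value_one f : sys f -> exists2 a : Cx, a ^+ 2 = a + 1 & f (Some 1) = Some (2 - a).
Proof.
move=> /sys_B fB; have [a fa ha] := systemB_infinity fB.
by exists a; rewrite // systemB_one // fa mobL_golden.
Qed.

Lemma sys_unique_solution (a : Cx) : a ^+ 2 = a + 1 ->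
  exists f, sys f /\ f (Some 1) = Some (2 - a) /\
    forall g, sys g -> g (Some 1) = Some (2 - a) -> g = f.
Proof.
move=> ha; have solA := solution_systemA (tau_golden ha).
have solB := systemA_systemB solA.
exists (solution a); split; first exact: sys_A.
split; first by rewrite systemB_one // mobL_golden.
move=> g /sys_B gB; have [b gb hb] := systemB_infinity gB.
rewrite systemB_one // gb mobL_golden // => -[] /addrI /oppr_inj eq_ba.
by apply: systemB_unique; rewrite // gb eq_ba.
Qed.

End IntermediateSystem.

Theorem mainTheorem10 :
  forall sys : (P1 rat -> P1 Cx) -> Prop, (sys = systemA \/ sys = systemB) ->
    (forall f, sys f -> f (Some 1) = Some phi2 \/ f (Some 1) = Some phibar2) /\
    (exists f, sys f /\ f (Some 1) = Some phi2 /\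
       forall g, sys g -> g (Some 1) = Some phi2 -> g = f) /\
    (exists f, sys f /\ f (Some 1) = Some phibar2 /\
       forall g, sys g -> g (Some 1) = Some phibar2 -> g = f).
Proof.
move=> sys hsys.
have sys_B f : sys f -> systemB f by case: hsys => -> //; exact: systemA_systemB.
have sys_A f : systemA f -> sys f by case: hsys => -> //; exact: systemA_systemB.
have golden_phi : phiC ^+ 2 = phiC + 1 by apply/golden_roots; left.
have golden_psi : psiC ^+ 2 = psiC + 1 by apply/golden_roots; right.
rewrite phi2E phibar2E; split; [|split].
- by move=> f /(sys_value_one sys_B) [a /golden_roots [] -> ->]; [right | left].
- exact: sys_unique_solution sys_B sys_A _ golden_psi.
- exact: sys_unique_solution sys_B sys_A _ golden_phi.
Qed.
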